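(* Let $0<\mu<L$, $\kappa=L/\mu$, and let $m(z)=z^n+\sum_{i=0}^{n-1}m_iz^i\in\mathbb{R}[z]$ be monic of degree $n\ge1$. Let $d(z)\in\mathbb{R}[z]$ with $\deg d<n$, and let $\rho>0$ be such that for every $\lambda\in[\mu,L]$ all roots of $m(z)-\lambda d(z)$ have modulus at most $\rho$. Then $$\rho\ \ge\ \max_{k=1,\dots,n}\Bigl(\frac{|m_{n-k}|}{\binom{n}{k}}\cdot\frac{\kappa-1}{\kappa+1}\Bigr)^{1/k}.$$
   Context: Here $m_{n-k}$ denotes the coefficient of $z^{n-k}$ in $m(z)$ (with $m_n=1$ implicitly for the leading coefficient, so that the $k=n$ term uses $m_0$). *)

From mathcomp Require Import all_boot all_algebra.
From mathcomp Require Import reals exp complex.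
Import GRing.Theory Num.Theory.
Local Open Scope ring_scope.

Definition cmod {R : realType} (z : R[i]) : R := Normc.normc z.

Definition cpoly {R : realType} (p : {poly R}) : {poly R[i]} :=
  map_poly (fun x : R => (x%:C)%C) p.

Definition roots_bounded_by {R : realType} (p : {poly R}) (rho : R) : Prop :=
  forall z : R[i], root (cpoly p) z -> cmod z <= rho.

From mathcomp Require Import all_boot all_order all_algebra.
From mathcomp Require Import ring.
From mathcomp Require Import reals exp complex.
Import Order.TTheory GRing.Theory Num.Theory.
Set Implicit Arguments.
Unset Strict Implicit.
Unset Printing Implicit Defensive.

Local Open Scope ring_scope.

(* For lambda in [mu, L] the polynomial m - lambda d is monic of degree n with
   roots in the disc of radius rho, so by Vieta's formulas its coefficient of
   z^(n-k) is at most C(n, k) rho^k in modulus.  The coefficient of m is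
   recovered from those of the two pencil members at lambda = mu and lambda = L:
   (L - mu) m_(n-k) = L (m - mu d)_(n-k) - mu (m - L d)_(n-k), whence
   |m_(n-k)| (L - mu) <= (L + mu) C(n, k) rho^k. *)

Lemma norm_coef_prod_XsubC_le (C : numDomainType) (s : seq C) (r : C) :
    0 <= r -> (forall z, z \in s -> `|z| <= r) ->
  forall i, `|(\prod_(z <- s) ('X - z%:P))`_i| <= 'C(size s, i)%:R * r ^+ (size s - i).
Proof.
move=> r_ge0; elim: s => [|z s IHs] s_le i.
  rewrite big_nil coef1; case: i => [|i] /=; first by rewrite normr1 expr0 mulr1.
  by rewrite normr0 bin0n mul0r.
have z_le : `|z| <= r by apply: s_le; rewrite mem_head.
have {}IHs := IHs (fun y y_s => s_le y (@mem_behead _ (z :: s) _ y_s)).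
rewrite big_cons mulrBl coefB coefXM coefCM /=.
case: i => [|i] /=.
  rewrite sub0r normrN normrM !bin0 mul1r subn0 exprS.
  by apply: ler_pM => //; have := IHs 0%N; rewrite bin0 mul1r subn0.
rewrite binS natrD mulrDl subSS addrC.
apply: (le_trans (ler_normD _ _)); rewrite normrN normrM.
apply: lerD; last exact: IHs.
have [i_lt | s_le_i] := ltnP i (size s).
  rewrite -(subnSK i_lt) exprS mulrCA; apply: ler_pM => //; exact: IHs.
have := IHs i.+1; rewrite bin_small ?ltnS // mul0r normr_le0 => /eqP ->.
by rewrite normr0 mulr0 mul0r.
Qed.

Lemma normc_realC (R : realType) (x : R) : `|(x%:C)%C| = (`|x|%:C)%C.
Proof. by rewrite normc_def /= expr0n /= addr0 sqrtr_sqr. Qed.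

Lemma roots_bounded_coef_le (R : realType) (p : {poly R}) (n : nat) (rho : R) :
    p \is monic -> size p = n.+1 -> 0 <= rho -> roots_bounded_by p rho ->
  forall k, (k <= n)%N -> `|p`_(n - k)| <= 'C(n, k)%:R * rho ^+ k.
Proof.
move=> p_monic size_p rho_ge0 p_roots k k_le_n.
have [r p_split] := closed_field_poly_normal (cpoly p).
rewrite lead_coef_map /= (monicP p_monic) scale1r in p_split.
have size_r : size r = n.
  have := size_map_poly (real_complex R) p.
  by rewrite -/(cpoly p) p_split size_prod_XsubC size_p => -[].
have r_le z : z \in r -> `|z| <= (rho%:C)%C.
  move=> z_r; change ((cmod z)%:C <= rho%:C)%C; rewrite lecR; apply: p_roots.
  by rewrite p_split root_prod_XsubC.
have rhoC_ge0 : 0 <= (rho%:C)%C by rewrite lecR.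
have := @norm_coef_prod_XsubC_le _ r _ rhoC_ge0 r_le (n - k).
rewrite -p_split size_r subKn // bin_sub // coef_map /= normc_realC.
by rewrite -lecR rmorphM rmorphXn rmorph_nat.
Qed.

Lemma monic_subZ_lower_deg (R : nzRingType) (m d : {poly R}) (lambda : R) :
    m \is monic -> (size d < size m)%N ->
  m - lambda *: d \is monic /\ size (m - lambda *: d) = size m.
Proof.
move=> m_monic size_d; have size_Zd : (size (- (lambda *: d)) < size m)%N.
  by rewrite size_polyN (leq_ltn_trans (size_scale_leq _ _)).
by rewrite monicE lead_coefDl // (monicP m_monic) size_polyDl.
Qed.

Lemma norm_mul_le_of_pencil (R : numDomainType) (mu L a b B : R) :
    0 <= mu -> 0 <= L -> `|a - mu * b| <= B -> `|a - L * b| <= B ->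
  `|a| * `|L - mu| <= (L + mu) * B.
Proof.
move=> mu_ge0 L_ge0 le_mu le_L.
have -> : `|a| * `|L - mu| = `|L * (a - mu * b) - mu * (a - L * b)|.
  by rewrite -normrM; congr `|_|; ring.
apply: (le_trans (ler_normB _ _)).
rewrite !normrM (ger0_norm mu_ge0) (ger0_norm L_ge0) mulrDl.
by apply: lerD; apply: ler_wpM2l.
Qed.

Lemma norm_le_of_pencil (R : numFieldType) (mu L a b B : R) :
    0 <= mu -> mu < L -> `|a - mu * b| <= B -> `|a - L * b| <= B ->
  `|a| * ((L - mu) / (L + mu)) <= B.
Proof.
move=> mu_ge0 mu_lt_L le_mu le_L; have L_gt0 := le_lt_trans mu_ge0 mu_lt_L.
have L_mu_gt0 : 0 < L + mu by rewrite (lt_le_trans L_gt0) ?lerDl.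
have L_sub_mu_gt0 : 0 < L - mu by rewrite subr_gt0.
rewrite mulrA ler_pdivrMr // (mulrC B) -(gtr0_norm L_sub_mu_gt0).
exact: norm_mul_le_of_pencil (ltW L_gt0) le_mu le_L.
Qed.

Lemma condition_ratioE (R : fieldType) (mu L : R) : mu != 0 ->
  (L / mu - 1) / (L / mu + 1) = (L - mu) / (L + mu).
Proof.
by move=> mu_neq0; rewrite -[1](divff mu_neq0) -mulrBl -mulrDl invf_div mulrA divfK.
Qed.

Lemma powR_invn_le (R : realType) (x rho : R) (k : nat) :
  (0 < k)%N -> 0 <= x -> 0 <= rho -> x <= rho ^+ k -> x `^ k%:R^-1 <= rho.
Proof.
move=> k_gt0 x_ge0 rho_ge0 x_le.
have -> : rho = (rho ^+ k) `^ k%:R^-1.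
  by rewrite -powR_mulrn // -powRrM mulfV ?powRr1 // pnatr_eq0 -lt0n.
by apply: ge0_ler_powR; rewrite ?invr_ge0 ?ler0n // nnegrE exprn_ge0.
Qed.

Theorem mainTheorem5 (R : realType) (mu L : R) (n : nat)
    (m d : {poly R}) (rho : R) :
  0 < mu -> mu < L ->
  (1 <= n)%N ->
  m \is monic -> size m = n.+1 ->
  (size d < size m)%N ->
  0 < rho ->
  (forall lambda : R, mu <= lambda <= L ->
     roots_bounded_by (m - lambda *: d) rho) ->
  let kappa := L / mu in
  \big[Num.max/0]_(1 <= k < n.+1)
     powR (`|m`_(n - k)| / 'C(n, k)%:R * ((kappa - 1) / (kappa + 1)))
          (k%:R)^-1
  <= rho.
Proof.
move=> mu_gt0 mu_lt_L _ m_monic size_m size_d rho_gt0 pencil_roots.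
rewrite [is_true _]/=.
have coef_pencil lambda k : mu <= lambda <= L -> (k <= n)%N ->
    `|m`_(n - k) - lambda * d`_(n - k)| <= 'C(n, k)%:R * rho ^+ k.
  move=> lambda_in k_le_n.
  have [pm_monic size_pm] := monic_subZ_lower_deg lambda m_monic size_d.
  rewrite -coefZ -coefB; apply: roots_bounded_coef_le (ltW rho_gt0) _ _ k_le_n => //.
  - by rewrite size_pm.
  - exact: pencil_roots.
rewrite big_nat_cond; apply: bigmax_le => [|k /andP[/andP[k_gt0 k_le_n] _]].
  exact: ltW.
rewrite ltnS in k_le_n; have C_gt0 : 0 < 'C(n, k)%:R :> R by rewrite ltr0n bin_gt0.
have ratio_ge0 : 0 <= (L - mu) / (L + mu).
  by rewrite divr_ge0 ?subr_ge0 ?ltW ?addr_gt0 // (lt_trans mu_gt0 mu_lt_L).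
rewrite condition_ratioE ?lt0r_neq0 //.
apply: (powR_invn_le k_gt0 _ (ltW rho_gt0)).
  by rewrite mulr_ge0 // divr_ge0.
rewrite mulrAC ler_pdivrMr // (mulrC (rho ^+ k)).
have mu_in : mu <= mu <= L by rewrite lexx ltW.
have L_in : mu <= L <= L by rewrite lexx ltW.
exact: norm_le_of_pencil (ltW mu_gt0) mu_lt_L (coef_pencil _ _ mu_in k_le_n)
  (coef_pencil _ _ L_in k_le_n).
Qed.
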